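(* Let $n,d \geq 1$. The morphism $\mathbb{P}^1\times\mathbb{P}^n \to \mathbb{P}^{2(n+1)}$ given by \[[x_0:x_1]\times[y_0:\ldots:y_n] \mapsto [x_0^dy_0 : x_0^dy_1 : \ldots : x_0^dy_{n-1} : x_0^dy_n : x_1^dy_n : dx_0x_1^{d-1}y_0 : x_1^dy_0 + dx_0x_1^{d-1}y_1 : x_1^dy_1 + dx_0x_1^{d-1}y_2 : \ldots : x_1^dy_{n-1} + dx_0x_1^{d-1}y_n]\] is injective. In particular, $\operatorname{injdim}(\mathbb{P}^1\times\mathbb{P}^n,\mathcal{O}(d,1)) \leq 2(n+1)$.
   Context: Over $\mathbb{C}$. For a line bundle $\mathscr{L}$ on a projective variety $X$ and a nonzero subspace $V \subseteq H^0(X,\mathscr{L})$, $\varphi_V \colon X \dashrightarrow \mathbb{P}(V^* )$ is the rational map given by the sections in $V$; $\operatorname{injdim}(X,\mathscr{L}) := \inf\{\dim V - 1 : \varphi_V \text{ is an injective morphism}\}$. *)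

From HB Require Import structures.
From mathcomp Require Import all_boot all_order all_algebra.
From mathcomp Require Import complex.
From mathcomp Require Import Rstruct.
Set Implicit Arguments. Unset Strict Implicit. Unset Printing Implicit Defensive.
Import Order.TTheory GRing.Theory Num.Theory.
Local Open Scope ring_scope.

Definition C : fieldType := complex Rdefinitions.R.

Definition proj_eq (m : nat) (v w : 'rV[C]_m) : Prop :=
  exists2 l : C, l != 0 & v = l *: w.

(** coordinate i of a row vector, given as a nat (only used for i < m) *)
Definition crd (m : nat) (v : 'rV[C]_m.+1) (i : nat) : C := v ord0 (inord i).

Definition themap (n d : nat) (x : 'rV[C]_2) (y : 'rV[C]_n.+1)
    : 'rV[C]_((2 * n.+1).+1) :=
  let x0 := x ord0 0%R in
  let x1 := x ord0 1%R in
  \row_(k < (2 * n.+1).+1)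
    if (k <= n)%N then x0 ^+ d * crd y k
    else if k == n.+1 :> nat then x1 ^+ d * crd y n
    else if k == n.+2 :> nat then d%:R * x0 * x1 ^+ d.-1 * crd y 0
    else x1 ^+ d * crd y (k - n.+3)%N
         + d%:R * x0 * x1 ^+ d.-1 * crd y (k - n.+3).+1.

(** Global sections of O(d,1) on P^1 x P^n: bihomogeneous polynomials of
    bidegree (d,1) in ([x0:x1],[y0:..:yn]), encoded by their coefficient
    matrix c : the section is  sum_(a<=d, j<=n) c a j x0^a x1^(d-a) y_j. *)
Definition sections (n d : nat) := 'M[C]_(d.+1, n.+1).

Definition sec_eval (n d : nat) (c : sections n d) (x : 'rV[C]_2)
    (y : 'rV[C]_n.+1) : C :=
  \sum_(a < d.+1) \sum_(j < n.+1)
     c a j * x ord0 0%R ^+ a * x ord0 1%R ^+ (d - a) * y ord0 j.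

(** phi_V is a morphism: no base points, i.e. for every point some
    section of V does not vanish there. *)
Definition phiV_morphism (n d : nat) (V : {vspace sections n d}) : Prop :=
  forall (x : 'rV[C]_2) (y : 'rV[C]_n.+1), x != 0 -> y != 0 ->
    exists2 s, s \in V & sec_eval s x y != 0.

(** phi_V is injective: phi_V(p) is the point [ev_p] of P(dual of V), so
    phi_V(p) = phi_V(q) iff ev_p and ev_q are proportional on V. *)
Definition phiV_injective (n d : nat) (V : {vspace sections n d}) : Prop :=
  forall (x x' : 'rV[C]_2) (y y' : 'rV[C]_n.+1),
    x != 0 -> y != 0 -> x' != 0 -> y' != 0 ->
    (exists2 l : C, l != 0 &
       forall s, s \in V -> sec_eval s x y = l * sec_eval s x' y') ->
    proj_eq x x' /\ proj_eq y y'.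

(** injdim(P^1 x P^n, O(d,1)) <= N : the infimum (over nat) of
    dim V - 1, over nonzero V with phi_V an injective morphism, is <= N,
    i.e. some such V has dim V - 1 <= N. *)
Definition injdim_le (n d N : nat) : Prop :=
  exists V : {vspace sections n d},
    [/\ V != 0%VS, phiV_morphism V, phiV_injective V & ((\dim V).-1 <= N)%N].

From HB Require Import structures.
From mathcomp Require Import all_boot all_order all_algebra.
From mathcomp Require Import complex Rstruct ring zify.
Set Implicit Arguments. Unset Strict Implicit. Unset Printing Implicit Defensive.
Import GRing.Theory Num.Theory.
Local Open Scope ring_scope.

(* With a = x0^d, b = x1^d and c = d x0 x1^(d-1), the coordinates of the map are
   a y_k, b y_n, c y_0 and b y_i + c y_(i+1).  For fixed y <> 0 they determine
   (a, b, c) linearly: the b-part is a backward recurrence started by b y_n, so it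
   only vanishes for b = 0.  If x0 <> 0, the coordinates a y_k fix [y]; then
   (a, b, c) is fixed up to the factor t = (x0/x0')^d, and x1 is recovered from
   x1^d and x0 x1^(d-1).  If x0 = 0, the coordinates reduce to x1^d y.  Every
   coordinate is a section of O(d,1), so the 2n+3 coordinate sections span a space
   V whose phi_V is this injective morphism. *)

Lemma backward_recurrence_eq0 (R : idomainType) (n : nat) (b c : R) (Z : nat -> R) :
  b != 0 -> b * Z n = 0 -> (forall i, (i < n)%N -> b * Z i + c * Z i.+1 = 0) ->
  forall k, (k <= n)%N -> Z k = 0.
Proof.
move=> b_neq0 bZn step.
have cancel_b z : b * z = 0 -> z = 0.
  by move/eqP; rewrite mulf_eq0 (negbTE b_neq0) => /eqP.
suff Z_sub : forall m, (m <= n)%N -> Z (n - m)%N = 0.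
  by move=> k kn; have := Z_sub (n - k)%N (leq_subr _ _); rewrite subKn.
elim=> [_|m IH lt_mn]; first by rewrite subn0; apply: cancel_b.
apply: cancel_b; have := step (n - m.+1)%N.
rewrite subnSK // IH; last by apply: ltnW.
by rewrite mulr0 addr0; apply; exact: leq_subr.
Qed.

Lemma expf_consecutive_inj (R : idomainType) (e : nat) (u v : R) :
  u ^+ e.+1 = v ^+ e.+1 -> u ^+ e = v ^+ e -> u = v.
Proof.
move=> eS eE; have [ue0|ue_neq0] := eqVneq (u ^+ e) 0.
  have /andP[_ /eqP->] : (0 < e)%N && (u == 0) by rewrite -expf_eq0 ue0.
  by have /andP[_ /eqP->] : (0 < e)%N && (v == 0) by rewrite -expf_eq0 -eE ue0.
by apply: (mulIf ue_neq0); rewrite -exprS eS eE -exprS.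
Qed.

Lemma binary_monomials_scale (F : fieldType) (e : nat) (u v u' v' : F) :
  u != 0 -> u' != 0 ->
  v ^+ e.+1 = u ^+ e.+1 / u' ^+ e.+1 * v' ^+ e.+1 ->
  u * v ^+ e = u ^+ e.+1 / u' ^+ e.+1 * (u' * v' ^+ e) -> v = u / u' * v'.
Proof.
move=> u_neq0 u'_neq0; rewrite -expr_div_n; set la := u / u'.
have u_la : u = la * u' by rewrite /la divfK.
clearbody la.
move=> eS eM; apply: (@expf_consecutive_inj _ e); first by rewrite exprMn.
by apply: (mulfI u_neq0); rewrite eM u_la exprMn exprS; ring.
Qed.

Section TwistedCoordinates.
Variables (F : fieldType) (n : nat).

Definition twist_coords (a b c : F) (Y : nat -> F) (k : nat) : F :=
  if (k <= n)%N then a * Y k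
  else if k == n.+1 then b * Y n
  else if k == n.+2 then c * Y 0%N
  else b * Y (k - n.+3)%N + c * Y (k - n.+3).+1.

Lemma twist_coords_low a b c Y k : (k <= n)%N -> twist_coords a b c Y k = a * Y k.
Proof. by rewrite /twist_coords => ->. Qed.

Lemma twist_coords_top a b c Y : twist_coords a b c Y n.+1 = b * Y n.
Proof. by rewrite /twist_coords ltnn eqxx. Qed.

Lemma twist_coords_mid a b c Y : twist_coords a b c Y n.+2 = c * Y 0%N.
Proof. by rewrite /twist_coords ltnNge leqW // eqn_leq ltnn eqxx. Qed.

Lemma twist_coords_high a b c Y i :
  twist_coords a b c Y (n.+3 + i) = b * Y i + c * Y i.+1.
Proof.
rewrite /twist_coords ifF; last by lia.
by rewrite ifF; [rewrite ifF; [rewrite addKn | lia] | lia].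
Qed.

Lemma twist_coords_eq0 a b c Y : (a != 0) || (b != 0) ->
  (forall k, (k < (2 * n.+1).+1)%N -> twist_coords a b c Y k = 0) ->
  forall j, (j <= n)%N -> Y j = 0.
Proof.
move=> /orP[a_neq0|b_neq0] coords0 j jn.
  move/eqP: (coords0 j ltac:(lia)).
  by rewrite twist_coords_low // mulf_eq0 (negbTE a_neq0) => /eqP.
apply: (backward_recurrence_eq0 (c := c) b_neq0 _ _ jn) => [|i lt_in].
  by rewrite -(twist_coords_top a b c) coords0 //; lia.
by rewrite -(twist_coords_high a) coords0 //; lia.
Qed.

Lemma twist_coords_eq0_coef a b c Y j : (j <= n)%N -> Y j != 0 ->
  (forall k, (k < (2 * n.+1).+1)%N -> twist_coords a b c Y k = 0) ->
  [/\ a = 0, b = 0 & c = 0].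
Proof.
move=> jn Yj coords0.
have /norP[/negbNE/eqP a0 /negbNE/eqP b0] : ~~ ((a != 0) || (b != 0)).
  by apply: contra Yj => ab; rewrite (twist_coords_eq0 ab coords0 jn).
split=> //; apply/eqP; apply: contraNT Yj => c_neq0; apply/eqP.
case: j jn => [_|i lt_in].
  move/eqP: (coords0 n.+2 ltac:(lia)).
  by rewrite twist_coords_mid mulf_eq0 (negbTE c_neq0) => /eqP.
move/eqP: (coords0 (n.+3 + i) ltac:(lia)).
by rewrite twist_coords_high b0 mul0r add0r mulf_eq0 (negbTE c_neq0) => /eqP.
Qed.

Lemma twist_coords_sub_scale a b c a' b' c' t mu Y Y' k :
  (forall j, (j <= n)%N -> Y j = mu * Y' j) -> (k < (2 * n.+1).+1)%N ->
  twist_coords a b c Y k - mu * t * twist_coords a' b' c' Y' k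
    = mu * twist_coords (a - t * a') (b - t * b') (c - t * c') Y' k.
Proof.
move=> YE kN; rewrite /twist_coords.
case: ifP => [kn|/negbT kn]; first by rewrite YE //; ring.
case: eqP => [_|/eqP kn1]; first by rewrite YE //; ring.
case: eqP => [_|/eqP kn2]; first by rewrite YE //; ring.
rewrite !YE; [ring | lia | lia].
Qed.

Section Proportional.
Variables (a b c a' b' c' l : F) (Y Y' : nat -> F).
Hypothesis l_neq0 : l != 0.
Hypothesis coordsE : forall k, (k < (2 * n.+1).+1)%N ->
  twist_coords a b c Y k = l * twist_coords a' b' c' Y' k.

Lemma twist_lead_eq0 :
  (exists2 j, (j <= n)%N & Y j != 0) -> (exists2 j, (j <= n)%N & Y' j != 0) ->
  (a == 0) = (a' == 0).
Proof.
move=> [j jn Yj] [j' jn' Y'j']; apply/eqP/eqP => [a0|a'0].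
  move/eqP: (@coordsE j' ltac:(lia)); rewrite !twist_coords_low // a0 mul0r eq_sym.
  by rewrite !mulf_eq0 (negbTE l_neq0) (negbTE Y'j') orbF => /eqP.
move/eqP: (@coordsE j ltac:(lia)); rewrite !twist_coords_low // a'0 mul0r mulr0.
by rewrite mulf_eq0 (negbTE Yj) orbF => /eqP.
Qed.

Lemma twist_low_scale : a != 0 -> forall k, (k <= n)%N -> Y k = l * a' / a * Y' k.
Proof.
move=> a_neq0 k kn; apply: (mulfI a_neq0).
rewrite -(twist_coords_low a b c Y kn) coordsE; last by lia.
by rewrite twist_coords_low //; field.
Qed.

Lemma twist_affine_scale : a != 0 -> a' != 0 ->
  (exists2 j, (j <= n)%N & Y' j != 0) -> b = a / a' * b' /\ c = a / a' * c'.
Proof.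
move=> a_neq0 a'_neq0 [j jn Y'j].
have mu_neq0 : l * a' / a != 0 by rewrite !mulf_neq0 ?invr_eq0.
have diff0 k : (k < (2 * n.+1).+1)%N ->
    twist_coords (a - a / a' * a') (b - a / a' * b') (c - a / a' * c') Y' k = 0.
  move=> kN; apply: (mulfI mu_neq0); rewrite mulr0.
  rewrite -(twist_coords_sub_scale a b c a' b' c' (a / a') (twist_low_scale a_neq0) kN).
  have -> : l * a' / a * (a / a') = l by field; rewrite a_neq0 a'_neq0.
  by rewrite coordsE // subrr.
have [_ /eqP b0 /eqP c0] := twist_coords_eq0_coef jn Y'j diff0.
by split; apply/eqP; rewrite -subr_eq0.
Qed.

Lemma twist_degenerate_scale : c = 0 -> c' = 0 -> b != 0 ->
  forall k, (k <= n)%N -> Y k = l * b' / b * Y' k.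
Proof.
move=> c0 c'0 b_neq0 k kn; apply: (mulfI b_neq0).
have bYk : b * Y k = l * (b' * Y' k).
  case: (ltngtP k n) kn => // [lt_kn _|-> _].
    have := @coordsE (n.+3 + k) ltac:(lia).
    by rewrite !twist_coords_high c0 c'0 !mul0r !addr0.
  by have := @coordsE n.+1 ltac:(lia); rewrite !twist_coords_top.
by rewrite bYk; field.
Qed.

End Proportional.
End TwistedCoordinates.

Lemma exists_row_entry_neq0 (R : nmodType) m (v : 'rV[R]_m) :
  v != 0 -> exists k, v ord0 k != 0.
Proof.
move=> v_neq0; apply/existsP; apply: contraNT v_neq0 => /existsPn v0.
by apply/eqP/rowP => k; rewrite mxE; apply/eqP/negPn/v0.
Qed.

Lemma const_mx1_neq0 (R : nzRingType) m : (const_mx 1 : 'rV[R]_m.+1) != 0.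
Proof. by apply/eqP => /rowP/(_ ord0)/eqP; rewrite !mxE oner_eq0. Qed.

Lemma row2_eq (R : nmodType) (x x' : 'rV[R]_2) :
  x ord0 0 = x' ord0 0 -> x ord0 1 = x' ord0 1 -> x = x'.
Proof.
move=> x0 x1; apply/rowP => -[[|[|//]]] j_lt.
  by rewrite (_ : Ordinal j_lt = 0) //; apply: val_inj.
by rewrite (_ : Ordinal j_lt = 1) //; apply: val_inj.
Qed.

Lemma row2_neq0 (R : nmodType) (x : 'rV[R]_2) :
  x != 0 -> x ord0 0 = 0 -> x ord0 1 != 0.
Proof.
by move=> x_neq0 x0; apply: contra_neq x_neq0 => x1; apply: row2_eq; rewrite mxE.
Qed.

Lemma row_scale_of_crd n (y y' : 'rV[C]_n.+1) (mu : C) :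
  (forall k, (k <= n)%N -> crd y k = mu * crd y' k) -> y = mu *: y'.
Proof.
move=> yE; apply/rowP => k; rewrite mxE.
by have := yE k; rewrite /crd inord_val; apply; rewrite -ltnS.
Qed.

Lemma exists_crd_neq0 n (y : 'rV[C]_n.+1) :
  y != 0 -> exists2 j, (j <= n)%N & crd y j != 0.
Proof.
move=> /exists_row_entry_neq0[j yj].
by exists j; [rewrite -ltnS | rewrite /crd inord_val].
Qed.

Section TheMap.
Variables (n d : nat).

Local Notation coords x y := (twist_coords n (x ord0 0 ^+ d) (x ord0 1 ^+ d)
  (d%:R * x ord0 0 * x ord0 1 ^+ d.-1) (crd y)).

Lemma themap_coord (x : 'rV[C]_2) (y : 'rV[C]_n.+1) k : (k < (2 * n.+1).+1)%N ->
  themap d x y ord0 (inord k) = coords x y k.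
Proof. by move=> kN; rewrite /themap mxE inordK. Qed.

Lemma themap_neq0 (x : 'rV[C]_2) (y : 'rV[C]_n.+1) :
  x != 0 -> y != 0 -> themap d x y != 0.
Proof.
move=> x_neq0 /exists_crd_neq0[j jn Yj]; apply/eqP => map0.
have coords0 k : (k < (2 * n.+1).+1)%N -> coords x y k = 0.
  by move=> kN; rewrite -themap_coord // map0 mxE.
have [/eqP a0 /eqP b0 _] := twist_coords_eq0_coef jn Yj coords0.
have [x0|x0_neq0] := eqVneq (x ord0 0) 0.
  by move: b0; rewrite expf_eq0 (negbTE (row2_neq0 x_neq0 x0)) andbF.
by move: a0; rewrite expf_eq0 (negbTE x0_neq0) andbF.
Qed.

Hypothesis d_gt0 : (0 < d)%N.

Section Fibre.
Variables (x x' : 'rV[C]_2) (y y' : 'rV[C]_n.+1) (l : C).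
Hypotheses (x_neq0 : x != 0) (y_neq0 : y != 0) (x'_neq0 : x' != 0) (y'_neq0 : y' != 0).
Hypothesis l_neq0 : l != 0.
Hypothesis coordsE :
  forall k, (k < (2 * n.+1).+1)%N -> coords x y k = l * coords x' y' k.

Lemma themap_fibre_x0_eq0_iff : (x ord0 0 == 0) = (x' ord0 0 == 0).
Proof.
have := twist_lead_eq0 l_neq0 coordsE (exists_crd_neq0 y_neq0) (exists_crd_neq0 y'_neq0).
by rewrite !expf_eq0 d_gt0.
Qed.

Lemma themap_fibre_x0_eq0 : x ord0 0 = 0 -> proj_eq x x' /\ proj_eq y y'.
Proof.
move=> x0; have /eqP x0' : x' ord0 0 == 0 by rewrite -themap_fibre_x0_eq0_iff x0.
have x1_neq0 := row2_neq0 x_neq0 x0; have x1'_neq0 := row2_neq0 x'_neq0 x0'.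
split.
  exists (x ord0 1 / x' ord0 1); first by rewrite mulf_neq0 ?invr_eq0.
  by apply: row2_eq; rewrite !mxE ?x0 ?x0' ?mulr0 ?divfK.
exists (l * x' ord0 1 ^+ d / x ord0 1 ^+ d).
  by rewrite !mulf_neq0 ?invr_eq0 ?expf_neq0.
apply/row_scale_of_crd/(twist_degenerate_scale l_neq0 coordsE).
- by rewrite x0 mulr0 mul0r.
- by rewrite x0' mulr0 mul0r.
- by rewrite expf_neq0.
Qed.

Lemma themap_fibre_x0_neq0 : x ord0 0 != 0 -> proj_eq x x' /\ proj_eq y y'.
Proof.
move=> x0_neq0.
have x0'_neq0 : x' ord0 0 != 0 by rewrite -themap_fibre_x0_eq0_iff.
have a_neq0 : x ord0 0 ^+ d != 0 by rewrite expf_neq0.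
have a'_neq0 : x' ord0 0 ^+ d != 0 by rewrite expf_neq0.
have [eb ec] :=
  twist_affine_scale l_neq0 coordsE a_neq0 a'_neq0 (exists_crd_neq0 y'_neq0).
split.
  exists (x ord0 0 / x' ord0 0); first by rewrite mulf_neq0 ?invr_eq0.
  apply: row2_eq; rewrite !mxE ?divfK //.
  have d_neq0 : d%:R != 0 :> C by rewrite pnatr_eq0 -lt0n.
  move: eb ec d_neq0; rewrite -(prednK d_gt0) /= => eb ec d_neq0.
  apply: (@binary_monomials_scale _ d.-1) => //; apply: (mulfI d_neq0).
  by rewrite [LHS]mulrA ec; ring.
exists (l * x' ord0 0 ^+ d / x ord0 0 ^+ d); first by rewrite !mulf_neq0 ?invr_eq0.
exact/row_scale_of_crd/(twist_low_scale l_neq0 coordsE a_neq0).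
Qed.

End Fibre.

Lemma themap_inj (x x' : 'rV[C]_2) (y y' : 'rV[C]_n.+1) :
  x != 0 -> y != 0 -> x' != 0 -> y' != 0 ->
  proj_eq (themap d x y) (themap d x' y') -> proj_eq x x' /\ proj_eq y y'.
Proof.
move=> x_neq0 y_neq0 x'_neq0 y'_neq0 [l l_neq0 mapE].
have coordsE k : (k < (2 * n.+1).+1)%N -> coords x y k = l * coords x' y' k.
  by move=> kN; rewrite -!themap_coord // mapE mxE.
have [x0|x0_neq0] := eqVneq (x ord0 0) 0.
  exact: themap_fibre_x0_eq0 coordsE x0.
exact: themap_fibre_x0_neq0 coordsE x0_neq0.
Qed.

End TheMap.

Section Sections.
Variables (n d : nat).
Implicit Types (c : sections n d) (x : 'rV[C]_2) (y : 'rV[C]_n.+1).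

Lemma sec_eval0 x y : sec_eval (0 : sections n d) x y = 0.
Proof. by rewrite /sec_eval big1 // => a _; rewrite big1 // => j _; rewrite mxE !mul0r. Qed.

Lemma sec_evalD c1 c2 x y : sec_eval (c1 + c2) x y = sec_eval c1 x y + sec_eval c2 x y.
Proof.
rewrite /sec_eval -big_split; apply: eq_bigr => a _.
by rewrite -big_split; apply: eq_bigr => j _; rewrite mxE !mulrDl.
Qed.

Lemma sec_evalZ (k : C) c x y : sec_eval (k *: c) x y = k * sec_eval c x y.
Proof.
rewrite /sec_eval mulr_sumr; apply: eq_bigr => a _.
by rewrite mulr_sumr; apply: eq_bigr => j _; rewrite mxE !mulrA.
Qed.

Definition sec_monomial (a j : nat) : sections n d := delta_mx (inord a) (inord j).

Lemma sec_eval_monomial a j x y : (a <= d)%N ->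
  sec_eval (sec_monomial a j) x y = x ord0 0 ^+ a * x ord0 1 ^+ (d - a) * crd y j.
Proof.
move=> ad; rewrite /sec_eval (bigD1 (inord a)) //= (bigD1 (inord j)) //=.
rewrite !mxE !eqxx mul1r.
rewrite big1 ?addr0 => [|j' /negbTE j'j]; last by rewrite mxE j'j andbF !mul0r.
rewrite big1 ?addr0 => [|a' /negbTE a'a]; last first.
  by rewrite big1 // => j' _; rewrite mxE a'a !mul0r.
by rewrite inordK.
Qed.

Definition themap_sec (k : nat) : sections n d :=
  if (k <= n)%N then sec_monomial d k
  else if k == n.+1 then sec_monomial 0 n
  else if k == n.+2 then d%:R *: sec_monomial 1 0
  else sec_monomial 0 (k - n.+3) + d%:R *: sec_monomial 1 (k - n.+3).+1.

Lemma sec_eval_themap_sec (k : 'I_(2 * n.+1).+1) x y : (0 < d)%N ->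
  sec_eval (themap_sec k) x y = themap d x y ord0 k.
Proof.
move=> d_gt0; rewrite /themap_sec /themap mxE.
case: ifP => _; first by rewrite sec_eval_monomial // subnn mulr1.
case: ifP => _; first by rewrite sec_eval_monomial // subn0 mul1r.
case: ifP => _; first by rewrite sec_evalZ sec_eval_monomial // subn1 expr1 !mulrA.
by rewrite sec_evalD sec_evalZ !sec_eval_monomial // subn0 subn1 expr1 mul1r !mulrA.
Qed.

End Sections.

Lemma injdim_le_of_sections n d N (f : 'rV[C]_2 -> 'rV[C]_n.+1 -> 'rV[C]_N.+1)
    (s : 'I_N.+1 -> sections n d) :
  (forall k x y, sec_eval (s k) x y = f x y ord0 k) ->
  (forall x y, x != 0 -> y != 0 -> f x y != 0) ->
  (forall x x' y y', x != 0 -> y != 0 -> x' != 0 -> y' != 0 ->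
     proj_eq (f x y) (f x' y') -> proj_eq x x' /\ proj_eq y y') ->
  injdim_le n d N.
Proof.
move=> sE f_neq0 f_inj; set V := <<codom s>>%VS.
have sV k : s k \in V by apply/memv_span/codom_f.
have morph : phiV_morphism V.
  move=> x y x_neq0 y_neq0.
  have [k fk] := exists_row_entry_neq0 (f_neq0 x y x_neq0 y_neq0).
  by exists (s k); rewrite ?sE.
exists V; split=> //.
- apply/eqP => V0; have [c] := morph _ _ (const_mx1_neq0 _ 1) (const_mx1_neq0 _ n).
  by rewrite V0 memv0 => /eqP->; rewrite sec_eval0 eqxx.
- move=> x x' y y' x_neq0 y_neq0 x'_neq0 y'_neq0 [l l_neq0 sl].
  apply: f_inj => //; exists l => //; apply/rowP => k.
  by rewrite mxE -!sE sl.
- by have := dim_span (codom s); rewrite size_codom card_ord -/V; case: (\dim V).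
Qed.

Theorem theorem4p6 (n d : nat) (hn : (1 <= n)%N) (hd : (1 <= d)%N) :
  (* the map is a well-defined morphism P^1 x P^n -> P^(2(n+1)) *)
  (forall (x : 'rV[C]_2) (y : 'rV[C]_n.+1),
      x != 0 -> y != 0 -> themap d x y != 0) /\
  (* it is injective *)
  (forall (x x' : 'rV[C]_2) (y y' : 'rV[C]_n.+1),
      x != 0 -> y != 0 -> x' != 0 -> y' != 0 ->
      proj_eq (themap d x y) (themap d x' y') ->
      proj_eq x x' /\ proj_eq y y') /\
  (* in particular injdim(P^1 x P^n, O(d,1)) <= 2(n+1) *)
  injdim_le n d (2 * n.+1).
Proof.
have map_inj := @themap_inj n d hd.
split; first exact: themap_neq0.
split; first exact: map_inj.
apply: (injdim_le_of_sections (s := themap_sec n d) _ _ map_inj).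
- by move=> k x y; apply: sec_eval_themap_sec.
- exact: themap_neq0.
Qed.
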